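(* Let $H\ge S\ge1$ and let $\{\boldsymbol{d}_{\theta s}\}$, $\theta=1,\ldots,H$, $s=1,\ldots,S$, be random variables that are jointly absolutely continuous with respect to Lebesgue measure on $\mathbb{R}_+^{H\times S}$; write $\boldsymbol{D}=[\boldsymbol{d}_{\theta s}]$. Let $k$ be a receiving agent with (deterministic) aggregate weight vector $x_k=[x_{1k},\ldots,x_{Sk}]^\top$ (entries strictly positive, summing to $1$). Let $\boldsymbol{\theta}^\star_k=\arg\min_{\theta\in\{1,\ldots,H\}}\sum_{s=1}^S x_{sk}\boldsymbol{d}_{\theta s}$, and when it is unique define $\boldsymbol{B}_k=(\mathbb{1}_He_{\boldsymbol{\theta}^\star_k}^\top-I_H)\boldsymbol{D}$ and $\boldsymbol{C}_k=\begin{bmatrix}\boldsymbol{B}_k\\ \mathbb{1}_S^\top\end{bmatrix}$. Then $$\mathbb{P}\big[\boldsymbol{\theta}^\star_k\text{ is unique and }\mathrm{rank}(\boldsymbol{C}_k)=S\big]=1.$$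
   Context: Setting: a weakly-connected network with $S$ sending sub-networks $\mathcal{N}_1,\ldots,\mathcal{N}_S$, in each of which all agents share the same true distribution $f^{(s)}$ and likelihoods $L^{(s)}(\theta)$, $\theta\in\{1,\ldots,H\}$; $\boldsymbol{d}_{\theta s}$ models the KL divergence $D[f^{(s)}\|L^{(s)}(\theta)]$. The combination matrix $A$ (nonnegative, left-stochastic) has block form $\begin{bmatrix}A_{\mathcal{S}}&A_{\mathcal{S}\mathcal{R}}\\0&A_{\mathcal{R}}\end{bmatrix}$ with $A_{\mathcal{S}}=\mathrm{blockdiag}\{A_{\mathcal{N}_s}\}$, each sending sub-network strongly connected with Perron vector $p^{(s)}$, each receiving sub-network connected and linked to at least one agent of every sending sub-network. With $E=\mathrm{blockdiag}\{p^{(s)}\mathbb{1}^\top_{N_s}\}$ and $\Omega=[\omega_{\ell k}]=EA_{\mathcal{S}\mathcal{R}}(I-A_{\mathcal{R}})^{-1}$, the aggregate weight is $x_{sk}=\sum_{\ell\in\mathcal{N}_s}\omega_{\ell k}$. $e_m$ is the $m$-th canonical basis vector of $\mathbb{R}^H$ and $\mathbb{1}_L$ the all-ones vector. *)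

From HB Require Import structures.
From mathcomp Require Import all_boot all_order all_algebra.
From mathcomp Require Import all_classical all_reals all_analysis.
Set Implicit Arguments. Unset Strict Implicit. Unset Printing Implicit Defensive.
Import Order.TTheory GRing.Theory Num.Theory.
Local Open Scope classical_set_scope.
Local Open Scope ring_scope.

Definition mx_box (R : realType) (H S : nat) (a b : 'M[R]_(H, S)) : set 'M[R]_(H, S) :=
  [set M | forall i j, a i j <= M i j /\ M i j <= b i j].

Definition mx_box_vol (R : realType) (H S : nat) (a b : 'M[R]_(H, S)) : R :=
  \prod_(i < H) \prod_(j < S) (b i j - a i j).

Definition lebesgue_null (R : realType) (H S : nat) (A : set 'M[R]_(H, S)) : Prop :=
  forall eps : R, 0 < eps ->
    exists a b : nat -> 'M[R]_(H, S),
      (forall n i j, a n i j <= b n i j) /\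
      A `<=` \bigcup_n mx_box (a n) (b n) /\
      (forall N, \sum_(n < N) mx_box_vol (a n) (b n) <= eps).

Definition agg_cost (R : realType) (H S : nat) (x : 'I_S -> R) (D : 'M[R]_(H, S))
  (t : 'I_H) : R := \sum_(s < S) x s * D t s.

Definition unique_argmin (R : realType) (H S : nat) (x : 'I_S -> R) (D : 'M[R]_(H, S))
  (t : 'I_H) : Prop :=
  forall t' : 'I_H, t' != t -> agg_cost x D t < agg_cost x D t'.

Definition Bmat (R : realType) (H S : nat) (D : 'M[R]_(H, S)) (t : 'I_H) : 'M[R]_(H, S) :=
  ((const_mx 1 : 'cV[R]_H) *m (delta_mx 0 t : 'rV[R]_H) - 1%:M) *m D.

Definition Cmat (R : realType) (H S : nat) (D : 'M[R]_(H, S)) (t : 'I_H) : 'M[R]_(H + 1, S) :=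
  col_mx (Bmat D t) (const_mx 1).

(* Every matrix [D] violating the conclusion lies in one of finitely many zero
   sets: a tie [sum_s x_s (D_{t s} - D_{t' s}) = 0] with [t <> t'], or the
   vanishing of [lead_minor t (S - 1)], the determinant of the square matrix
   made of the all-ones row and [S - 1] rows of [B_k], cut down to [S] columns
   (if it is nonzero, [C_k] has rank [S]).  Each of
   these functions is affine in a single entry of [D], with a coefficient whose
   zero set is already known to be null: a nonzero constant [x_s] for ties, and
   the next smaller leading minor for [lead_minor] (Laplace expansion along
   the last row).  Such a zero set lies in the zero set of the coefficient together
   with countably many graphs, over the remaining entries, of locally Lipschitz
   functions, and these graphs are Lebesgue-null by a grid covering.  Absolute
   continuity turns nullity into [P]-negligibility. *)

From HB Require Import structures.
From mathcomp Require Import all_boot all_order all_algebra.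
From mathcomp Require Import all_classical all_reals all_analysis.
From mathcomp Require Import ring lra.
Import Order.TTheory GRing.Theory Num.Theory.
Set Implicit Arguments. Unset Strict Implicit. Unset Printing Implicit Defensive.
Local Open Scope classical_set_scope.
Local Open Scope ring_scope.

(** * Locally Lipschitz functions of a matrix *)

Section LocallyLipschitz.
Variables (R : realType) (H S : nat).
Implicit Types (M N : 'M[R]_(H, S)) (f g : 'M[R]_(H, S) -> R).

Definition mx_cube (r : R) M := forall i j, `|M i j| <= r.

Definition mx_dist M N : R := \sum_i \sum_j `|M i j - N i j|.

Definition loc_lipschitz f := forall r, exists B L, forall M N,
  mx_cube r M -> mx_cube r N -> `|f M| <= B /\ `|f M - f N| <= L * mx_dist M N.

Lemma mx_dist_ge0 M N : 0 <= mx_dist M N.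
Proof. by apply: sumr_ge0 => i _; apply: sumr_ge0. Qed.

Lemma ler_dist_mx_dist M N i j : `|M i j - N i j| <= mx_dist M N.
Proof.
rewrite /mx_dist (bigD1 i) //= (bigD1 j) //= -addrA lerDl.
by apply: addr_ge0; apply: sumr_ge0 => *; rewrite ?sumr_ge0.
Qed.

Lemma loc_lipschitz_cst (c : R) : loc_lipschitz (fun=> c).
Proof. by move=> r; exists `|c|, 0 => M N _ _; rewrite subrr normr0 mul0r. Qed.

Lemma loc_lipschitz_coord i j : loc_lipschitz (fun M => M i j).
Proof. by move=> r; exists r, 1 => M N hM _; rewrite mul1r ler_dist_mx_dist. Qed.

Lemma loc_lipschitzD f g :
  loc_lipschitz f -> loc_lipschitz g -> loc_lipschitz (fun M => f M + g M).
Proof.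
move=> hf hg r; have [Bf [Lf {}hf]] := hf r; have [Bg [Lg {}hg]] := hg r.
exists (Bf + Bg), (Lf + Lg) => M N hM hN.
have [bf lf] := hf _ _ hM hN; have [bg lg] := hg _ _ hM hN.
split; first exact: le_trans (ler_normD _ _) (lerD bf bg).
rewrite opprD addrACA mulrDl; exact: le_trans (ler_normD _ _) (lerD lf lg).
Qed.

Lemma loc_lipschitzN f : loc_lipschitz f -> loc_lipschitz (fun M => - f M).
Proof.
move=> hf r; have [B [L {}hf]] := hf r; exists B, L => M N hM hN.
by rewrite -opprD !normrN; apply: hf.
Qed.

Lemma loc_lipschitzM f g :
  loc_lipschitz f -> loc_lipschitz g -> loc_lipschitz (fun M => f M * g M).
Proof.
move=> hf hg r; have [Bf [Lf {}hf]] := hf r; have [Bg [Lg {}hg]] := hg r.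
exists (Bf * Bg), (Bf * Lg + Bg * Lf) => M N hM hN.
have [bfM lf] := hf _ _ hM hN; have [bg lg] := hg _ _ hM hN.
have [bfN _] := hf _ _ hN hM.
have Bf0 : 0 <= Bf := le_trans (normr_ge0 _) bfM.
have Bg0 : 0 <= Bg := le_trans (normr_ge0 _) bg.
split; first by rewrite normrM ler_pM.
have -> : f M * g M - f N * g N = f N * (g M - g N) + g M * (f M - f N) by ring.
rewrite mulrDl -!mulrA; apply: le_trans (ler_normD _ _) _.
by rewrite !normrM; apply: lerD; apply: ler_pM.
Qed.

Lemma loc_lipschitz_sum (I : Type) (s : seq I) (F : I -> 'M[R]_(H, S) -> R) :
  (forall i, loc_lipschitz (F i)) -> loc_lipschitz (fun M => \sum_(i <- s) F i M).
Proof.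
move=> hF; elim: s => [|i s IH].
  under eq_fun do rewrite big_nil; exact: loc_lipschitz_cst.
under eq_fun do rewrite big_cons; exact: loc_lipschitzD.
Qed.

Lemma loc_lipschitz_prod (I : Type) (s : seq I) (F : I -> 'M[R]_(H, S) -> R) :
  (forall i, loc_lipschitz (F i)) -> loc_lipschitz (fun M => \prod_(i <- s) F i M).
Proof.
move=> hF; elim: s => [|i s IH].
  under eq_fun do rewrite big_nil; exact: loc_lipschitz_cst.
under eq_fun do rewrite big_cons; exact: loc_lipschitzM.
Qed.

Lemma loc_lipschitz_det n (A : 'M[R]_(H, S) -> 'M[R]_n) :
  (forall i j, loc_lipschitz (fun M => A M i j)) ->
  loc_lipschitz (fun M => \det (A M)).
Proof.
move=> hA; apply: loc_lipschitz_sum => s.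
apply: loc_lipschitzM; first exact: loc_lipschitz_cst.
by apply: loc_lipschitz_prod => i; apply: hA.
Qed.

Definition mx_set (y : 'I_H * 'I_S) (v : R) M : 'M[R]_(H, S) :=
  \matrix_(i, j) if (i, j) == y then v else M i j.

Lemma mx_setE y v M i j : mx_set y v M i j = if (i, j) == y then v else M i j.
Proof. by rewrite mxE. Qed.

Lemma mx_set_set y v u M : mx_set y v (mx_set y u M) = mx_set y v M.
Proof. by apply/matrixP => i j; rewrite !mx_setE; case: eqP. Qed.

Lemma loc_lipschitz_mx_set y v f :
  loc_lipschitz f -> loc_lipschitz (fun M => f (mx_set y v M)).
Proof.
move=> hf r; have [B [L {}hf]] := hf (`|r| + `|v|).
have cube_set M : mx_cube r M -> mx_cube (`|r| + `|v|) (mx_set y v M).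
  move=> hM i j; rewrite mx_setE; case: ifP => _; first by rewrite lerDr.
  by rewrite (le_trans (hM i j)) // (le_trans (ler_norm r)) // lerDl.
have dist_set M N : mx_dist (mx_set y v M) (mx_set y v N) <= mx_dist M N.
  apply: ler_sum => i _; apply: ler_sum => j _; rewrite !mx_setE.
  by case: ifP => _ //; rewrite subrr normr0.
exists B, `|L| => M N hM hN; have [bf lf] := hf _ _ (cube_set _ hM) (cube_set _ hN).
split => //; rewrite (le_trans lf) // (le_trans (ler_wpM2r (mx_dist_ge0 _ _) (ler_norm L))) //.
by rewrite ler_wpM2l.
Qed.

End LocallyLipschitz.

(** * Lebesgue-null graphs *)

Lemma ler_sum_supported (R : numDomainType) (f : nat -> R) m N :
  (forall n, 0 <= f n) -> (forall n, (m <= n)%N -> f n = 0) ->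
  \sum_(n < N) f n <= \sum_(n < m) f n.
Proof.
move=> f_ge0 f_out; have [NM|MN] := leqP N m.
  rewrite [leLHS](big_ord_widen m f NM) [leLHS]big_mkcond; apply: ler_sum => n _.
  by case: ifP.
rewrite [leRHS](big_ord_widen N f (ltnW MN)) [leRHS]big_mkcond.
by apply: ler_sum => n _; case: ltnP => // /f_out ->.
Qed.

Section NullSets.
Variables (R : realType) (H S : nat).
Implicit Types (a b : 'M[R]_(H, S)) (A : set 'M[R]_(H, S)).

Lemma mx_box_vol_ge0 a b : (forall i j, a i j <= b i j) -> 0 <= mx_box_vol a b.
Proof. by move=> ab; do 2![apply: prodr_ge0 => ? _]; rewrite subr_ge0. Qed.

Lemma mx_box_vol_degenerate (y : 'I_H * 'I_S) a : mx_box_vol a a = 0.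
Proof. by rewrite /mx_box_vol (bigD1 y.1) //= (bigD1 y.2) //= subrr !mul0r. Qed.

Lemma lebesgue_null_finite (y : 'I_H * 'I_S) A :
  (forall eps, 0 < eps -> exists (T : finType) (lo hi : T -> 'M[R]_(H, S)),
    [/\ forall c i j, lo c i j <= hi c i j,
        A `<=` \bigcup_c mx_box (lo c) (hi c) &
        \sum_c mx_box_vol (lo c) (hi c) <= eps]) ->
  lebesgue_null A.
Proof.
move=> hA eps /hA[T [lo [hi [lo_hi Acov vol_eps]]]].
pose box (F : T -> 'M[R]_(H, S)) n :=
  if insub n : option 'I_#|T| is Some i then F (enum_val i) else 0.
have box_enum F (i : 'I_#|T|) : box F i = F (enum_val i) by rewrite /box valK.
have box_le n i j : box lo n i j <= box hi n i j.
  by rewrite /box; case: insub => [c|]; rewrite ?mxE.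
exists (box lo), (box hi); split=> //; split=> [M /Acov[c _ Mc]|N].
  by exists (enum_rank c) => //; rewrite !box_enum enum_rankK.
apply: le_trans vol_eps; rewrite [leRHS]big_enum_val.
pose vol n := mx_box_vol (box lo n) (box hi n).
apply: le_trans (ler_sum_supported (m := #|T|) (f := vol) N _ _) _.
- by move=> n; apply: mx_box_vol_ge0.
- by move=> n hn; rewrite /vol /box insubN -?leqNgt // (mx_box_vol_degenerate y).
- by under eq_bigr do rewrite /vol !box_enum.
Qed.

End NullSets.

Lemma exists_div_nat_le (R : archiFieldType) (c d : R) :
  0 < d -> exists m : nat, c / m.+1%:R <= d.
Proof.
move=> d0; have [c0|c0] := lerP c 0.
  by exists 0%N; rewrite divr1 (le_trans c0) ?ltW.
have /archi_boundP cd := ltW (divr_gt0 c0 d0).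
exists (Num.Def.archi_bound (c / d)); rewrite ler_pdivrMr // mulrC -ler_pdivrMr //.
by rewrite ltW // (lt_le_trans cd) // ler_nat.
Qed.

Lemma prod2_if_at (R : comPzSemiRingType) (H S : nat) (y : 'I_H * 'I_S) (a : R)
    (b : 'I_H -> 'I_S -> R) :
  \prod_i \prod_j (if (i, j) == y then a else b i j) =
  a * \prod_i \prod_j (if (i, j) == y then 1 else b i j).
Proof.
case: y => i0 j0; rewrite (bigD1 i0) //= [in RHS](bigD1 i0) //=.
rewrite (bigD1 j0) //= [in RHS](bigD1 j0) //= !eqxx mul1r !mulrA; congr (_ * _ * _).
  by apply: eq_bigr => j /negbTE hj; rewrite xpair_eqE hj andbF.
by apply: eq_bigr => i /negbTE hi; apply: eq_bigr => j _; rewrite xpair_eqE hi.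
Qed.

Lemma sum_ffun2_prod (R : comPzSemiRingType) (I J K : finType) (W : I -> J -> K -> R) :
  \sum_(c : {ffun I -> {ffun J -> K}}) \prod_i \prod_j W i j (c i j) =
  \prod_i \prod_j \sum_k W i j k.
Proof.
rewrite [RHS](eq_bigr (fun i => \sum_(r : {ffun J -> K}) \prod_j W i j (r j))).
  by rewrite bigA_distr_bigA.
by move=> i _; rewrite bigA_distr_bigA.
Qed.

Lemma grid_cell (R : realFieldType) (c u w : R) (m : nat) : 0 <= w ->
  c <= u -> u <= c + m.+1%:R * w ->
  exists a : 'I_m.+1, c + a%:R * w <= u <= c + a.+1%:R * w.
Proof.
move=> w0 cu; elim: m => [|m IH] um; first by exists ord0; rewrite mul0r addr0 cu.
have [um'|mu] := lerP u (c + m.+1%:R * w).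
  by have [a ha] := IH um'; exists (widen_ord (leqnSn _) a).
by exists ord_max; rewrite (ltW mu) um.
Qed.

Section GraphNull.
Variables (R : realType) (H S : nat) (y : 'I_H * 'I_S).
Implicit Types (M N : 'M[R]_(H, S)).

Section Cells.
Variables (n w : R) (m : nat).
Hypotheses (w_ge0 : 0 <= w) (mesh_w : m.+1%:R * w = 2 * n).

Definition grid_lo (a : 'I_m.+1) : R := - n + a%:R * w.

Local Notation cell := {ffun 'I_H -> {ffun 'I_S -> 'I_m.+1}}.

Definition in_cell (c : cell) M :=
  forall i j, (i, j) != y -> grid_lo (c i j) <= M i j <= grid_lo (c i j) + w.

Lemma in_cell_exists M : mx_cube n M ->
  exists c : cell, c y.1 y.2 = ord0 /\ in_cell c M.
Proof.
move=> Mn; have cell_ij i j : exists a : 'I_m.+1,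
    if (i, j) == y then a = ord0 else grid_lo a <= M i j <= grid_lo a + w.
  case: eqP => _; first by exists ord0.
  have /andP[lo_M M_hi] : - n <= M i j <= - n + m.+1%:R * w.
    by move: (Mn i j); rewrite mesh_w ler_norml => /andP[? ?]; apply/andP; split; lra.
  have [a ha] := grid_cell w_ge0 lo_M M_hi.
  by exists a; move: ha; rewrite /grid_lo -natr1 mulrDl mul1r addrA.
have [F hF] := fin_all_exists (fun i => fin_all_exists (cell_ij i)).
exists [ffun i => [ffun j => F i j]]; split.
  by have := hF y.1 y.2; rewrite !ffunE -surjective_pairing eqxx.
by move=> i j hy; have := hF i j; rewrite !ffunE (negbTE hy).
Qed.

Lemma in_cell_dist (c : cell) M N : in_cell c M -> in_cell c N ->
  mx_dist (mx_set y 0 M) (mx_set y 0 N) <= (H * S)%:R * w.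
Proof.
move=> hM hN; have -> : (H * S)%:R * w = \sum_(i < H) \sum_(j < S) w.
  by rewrite !sumr_const !card_ord -mulrnA mulr_natl mulnC.
apply: ler_sum => i _; apply: ler_sum => j _; rewrite !mx_setE.
case: ifPn => hy; first by rewrite subrr normr0.
have /andP[? ?] := hM i j hy; have /andP[? ?] := hN i j hy.
by rewrite ler_norml; apply/andP; split; lra.
Qed.

(* Only cells with [c y = ord0] are thickened by [dl] at coordinate [y]; for the
   others the interval there is degenerate, so that each cell of the remaining
   coordinates contributes volume once. *)
Definition graph_lo (v : cell -> R) (dl : R) (c : cell) : 'M[R]_(H, S) := \matrix_(i, j)
  if (i, j) == y then (if c i j == ord0 then v c - dl else v c) else grid_lo (c i j).

Definition graph_hi (v : cell -> R) (dl : R) (c : cell) : 'M[R]_(H, S) := \matrix_(i, j)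
  if (i, j) == y then (if c i j == ord0 then v c + dl else v c)
  else grid_lo (c i j) + w.

Lemma graph_lo_le_hi (v : cell -> R) (dl : R) (c : cell) i j :
  0 <= dl -> graph_lo v dl c i j <= graph_hi v dl c i j.
Proof. by move=> dl0; rewrite !mxE; case: ifP => _; [case: ifP => _; lra | rewrite lerDl]. Qed.

Lemma graph_box_cover (v : cell -> R) (dl : R) (c : cell) M :
  in_cell c M -> c y.1 y.2 = ord0 ->
  `|M y.1 y.2 - v c| <= dl -> mx_box (graph_lo v dl c) (graph_hi v dl c) M.
Proof.
move=> Mc cy Mv i j; rewrite !mxE; case: (eqVneq (i, j) y) => [ijy|/Mc/andP//].
by move: Mv cy; rewrite -ijy ler_distl => /andP[? ?] /= ->; rewrite eqxx; split; lra.
Qed.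

Lemma sum_graph_vol (v : cell -> R) (dl : R) :
  \sum_c mx_box_vol (graph_lo v dl c) (graph_hi v dl c) =
  2 * dl * \prod_i \prod_j (if (i, j) == y then 1 else 2 * n).
Proof.
pose W i j (a : 'I_m.+1) := if (i, j) == y then (if a == ord0 then 2 * dl else 0) else w.
transitivity (\sum_(c : cell) \prod_i \prod_j W i j (c i j)).
  apply: eq_bigr => c _; do 2!(apply: eq_bigr => ? _).
  by rewrite !mxE /W; case: ifP => _; [case: ifP => _|]; ring.
rewrite sum_ffun2_prod -prod2_if_at; do 2!(apply: eq_bigr => ? _); rewrite /W.
case: ifP => _; last by rewrite sumr_const card_ord -mesh_w mulr_natl.
by rewrite (bigD1 ord0) //= big1 ?addr0 // => a /negbTE ->.
Qed.

End Cells.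

Lemma graph_null (n L : R) (K : set 'M[R]_(H, S)) (g : 'M[R]_(H, S) -> R) :
  0 <= n -> K `<=` mx_cube n ->
  (forall M N, K M -> K N ->
     `|g M - g N| <= L * mx_dist (mx_set y 0 M) (mx_set y 0 N)) ->
  lebesgue_null [set M | K M /\ M y.1 y.2 = g M].
Proof.
move=> n0 Kn gL; apply: (lebesgue_null_finite y) => eps eps0.
pose Q := \prod_i \prod_j (if (i, j) == y then 1 else 2 * n : R).
have Q0 : 0 <= Q.
  by do 2![apply: prodr_ge0 => ? _]; case: ifP => _; rewrite ?mulr_ge0.
pose dl := eps / (2 * (Q + 1)).
have dl0 : 0 < dl by rewrite divr_gt0 // mulr_gt0 // ltr_wpDl.
have [m mesh_small] := exists_div_nat_le (`|L| * (H * S)%:R * (2 * n)) dl0.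
pose w := 2 * n / m.+1%:R.
have w0 : 0 <= w by rewrite divr_ge0 ?mulr_ge0.
have mesh_w : m.+1%:R * w = 2 * n by rewrite mulrC divfK ?pnatr_eq0.
have osc (c : {ffun 'I_H -> {ffun 'I_S -> 'I_m.+1}}) :
    exists v, forall M, K M -> in_cell n w c M -> `|g M - v| <= dl.
  have [[M0 [KM0 cM0]]|no] := pselect (exists M, K M /\ in_cell n w c M).
    exists (g M0) => M KM cM; rewrite (le_trans (gL _ _ KM KM0)) // (le_trans _ mesh_small) //.
    have -> : `|L| * (H * S)%:R * (2 * n) / m.+1%:R = `|L| * ((H * S)%:R * w).
      by rewrite !mulrA.
    rewrite (le_trans (ler_wpM2r (mx_dist_ge0 _ _) (ler_norm L))) // ler_wpM2l //.
    exact: (in_cell_dist w0 cM cM0).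
  by exists 0 => M KM cM; case: no; exists M.
have [v hv] := choice osc.
exists {ffun 'I_H -> {ffun 'I_S -> 'I_m.+1}}, (graph_lo n w v dl), (graph_hi n w v dl).
rewrite sum_graph_vol // -/Q; split.
- by move=> c i j; apply: (graph_lo_le_hi n w0); exact: ltW.
- move=> M [KM gM]; have [c [cy cM]] := in_cell_exists w0 mesh_w (Kn _ KM).
  by exists c => //; apply: graph_box_cover; rewrite // gM hv.
- have Q1 : 0 < Q + 1 by rewrite ltr_wpDl.
  have -> : 2 * dl * Q = eps * (Q / (Q + 1)) by rewrite /dl; field; rewrite gt_eqF.
  by apply: ler_piMr; [exact: ltW | rewrite ler_pdivrMr // mul1r lerDl].
Qed.

End GraphNull.

(** * Zero sets of functions affine in one entry *)

Section AffineZeroSets.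
Variables (R : realType) (H S : nat) (y : 'I_H * 'I_S).
Implicit Types (M N : 'M[R]_(H, S)) (f al be : 'M[R]_(H, S) -> R).

Definition bounded_away al (k : nat) :=
  [set M | mx_cube k%:R M /\ k.+1%:R^-1 <= `|al M|].

Lemma affine_zero_subset f al be :
  (forall M, f M = al M * M y.1 y.2 + be M) ->
  [set M | f M = 0] `<=` [set M | al M = 0] `|`
    \bigcup_k [set M | bounded_away al k M /\ M y.1 y.2 = - be M / al M].
Proof.
move=> hf M /= fM0; have [|a0] := eqVneq (al M) 0; [by left | right].
pose X := mx_dist M 0 + `|al M|^-1.
have X0 : 0 <= X by rewrite addr_ge0 ?mx_dist_ge0 ?invr_ge0.
have /archi_boundP Xk := X0; set k := Num.Def.archi_bound X in Xk.
exists k => //; split; first split.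
- move=> i j; have := ler_dist_mx_dist M 0 i j; rewrite mxE subr0 => /le_trans-> //.
  by rewrite ltW // (le_lt_trans _ Xk) // lerDl invr_ge0.
- rewrite invf_ple ?posrE ?normr_gt0 // ltW // (le_lt_trans _ (lt_le_trans Xk _)) //.
    by rewrite /X lerDr mx_dist_ge0.
  by rewrite ler_nat.
- have -> : be M = - (al M * M y.1 y.2) by apply/eqP; rewrite -addr_eq0 addrC -hf fM0.
  by rewrite opprK mulrC mulKf.
Qed.

Lemma lipschitz_ratio al be (k : nat) :
  loc_lipschitz al -> loc_lipschitz be ->
  (forall M v, al (mx_set y v M) = al M) -> (forall M v, be (mx_set y v M) = be M) ->
  exists L, forall M N, bounded_away al k M -> bounded_away al k N ->
    `|be M / al M - be N / al N| <= L * mx_dist (mx_set y 0 M) (mx_set y 0 N).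
Proof.
move=> hal hbe al_set be_set.
have [Ba [La {}hal]] := hal k%:R; have [Bb [Lb {}hbe]] := hbe k%:R.
exists (k.+1%:R ^+ 2 * (Ba * Lb + Bb * La)) => M N [Mk Ma] [Nk Na].
have cube0 (P : 'M[R]_(H, S)) : mx_cube k%:R P -> mx_cube k%:R (mx_set y 0 P).
  by move=> Pk i j; rewrite mx_setE; case: ifP; rewrite ?normr0.
have [aM dA] := hal _ _ (cube0 _ Mk) (cube0 _ Nk).
have [bM dB] := hbe _ _ (cube0 _ Mk) (cube0 _ Nk).
rewrite !al_set !be_set in aM dA bM dB; set d := mx_dist _ _ in dA dB *.
have al_neq0 (P : 'M[R]_(H, S)) : k.+1%:R^-1 <= `|al P| -> al P != 0.
  by move=> Pa; rewrite -normr_gt0 (lt_le_trans _ Pa) // invr_gt0.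
have inv_le (P : 'M[R]_(H, S)) : k.+1%:R^-1 <= `|al P| -> `|(al P)^-1| <= k.+1%:R.
  by move=> Pa; rewrite normfV -[leRHS]invrK lef_pV2 ?posrE ?normr_gt0 ?al_neq0.
have num : `|be M * (al N - al M) + (be M - be N) * al M| <= (Ba * Lb + Bb * La) * d.
  rewrite (le_trans (ler_normD _ _)) // !normrM mulrDl addrC lerD //.
    by rewrite mulrC -mulrA ler_pM.
  by rewrite -mulrA distrC ler_pM.
have den : `|(al M)^-1 * (al N)^-1| <= k.+1%:R ^+ 2.
  by rewrite normrM expr2 ler_pM ?inv_le.
rewrite -mulrA [leRHS]mulrC.
have -> : be M / al M - be N / al N =
    (be M * (al N - al M) + (be M - be N) * al M) * ((al M)^-1 * (al N)^-1).
  by field; rewrite !al_neq0.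
by rewrite normrM ler_pM.
Qed.

End AffineZeroSets.

Definition null_ideal (R : realType) (H S : nat) (neg : set 'M[R]_(H, S) -> Prop) :=
  [/\ forall A B, A `<=` B -> neg B -> neg A,
      neg set0,
      forall F : nat -> set 'M[R]_(H, S), (forall k, neg (F k)) -> neg (\bigcup_k F k)
    & forall A, lebesgue_null A -> neg A].

Section NullIdeal.
Variables (R : realType) (H S : nat) (neg : set 'M[R]_(H, S) -> Prop).
Hypothesis hneg : null_ideal neg.

Lemma negS A B : A `<=` B -> neg B -> neg A.
Proof. by case: hneg => sub _ _ _; apply: sub. Qed.

Lemma neg0 : neg set0. Proof. by case: hneg. Qed.

Lemma neg_bigcup (F : nat -> set 'M[R]_(H, S)) :
  (forall k, neg (F k)) -> neg (\bigcup_k F k).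
Proof. by case: hneg => _ _ cup _; apply: cup. Qed.

Lemma neg_lebesgue_null A : lebesgue_null A -> neg A.
Proof. by case: hneg => _ _ _; apply. Qed.

Lemma negU A B : neg A -> neg B -> neg (A `|` B).
Proof.
move=> nA nB; apply: negS (neg_bigcup (F := fun k => if k is 0 then A else B) _).
  by move=> M [MA|MB]; [exists 0%N | exists 1%N].
by case.
Qed.

Lemma neg_bigcup_finite (T : finType) (F : T -> set 'M[R]_(H, S)) :
  (forall i, neg (F i)) -> neg (\bigcup_i F i).
Proof.
move=> nF; pose G k := if insub k : option 'I_#|T| is Some i then F (enum_val i) else set0.
apply: negS (neg_bigcup (F := G) _) => [M [i _ Fi]|k].
  by exists (enum_rank i) => //; rewrite /G valK enum_rankK.
by rewrite /G; case: insub => [i|]; [apply: nF | apply: neg0].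
Qed.

Lemma affine_zero_neg (y : 'I_H * 'I_S) (f al be : 'M[R]_(H, S) -> R) :
  loc_lipschitz al -> loc_lipschitz be ->
  (forall M v, al (mx_set y v M) = al M) -> (forall M v, be (mx_set y v M) = be M) ->
  (forall M, f M = al M * M y.1 y.2 + be M) ->
  neg [set M | al M = 0] -> neg [set M | f M = 0].
Proof.
move=> hal hbe al_set be_set hf al0.
apply: negS (affine_zero_subset hf) _; apply: negU => //; apply: neg_bigcup => k.
have [L hL] := lipschitz_ratio k hal hbe al_set be_set.
apply/neg_lebesgue_null/(graph_null (n := k%:R) (L := L)) => [//|M []//|M N MK NK].
by rewrite !mulNr -opprD normrN hL.
Qed.

End NullIdeal.

(** * Ties and leading minors *)

Lemma det_corner_update (R : comPzRingType) (n : nat) (A B : 'M[R]_n.+1) :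
  (forall i j, i != ord_max -> A i j = B i j) ->
  (forall j, j != ord_max -> A ord_max j = B ord_max j) ->
  \det A = \det B + (A ord_max ord_max - B ord_max ord_max) *
                    \det (row' ord_max (col' ord_max A)).
Proof.
move=> eq_rows eq_last.
have cof j : cofactor A ord_max j = cofactor B ord_max j.
  rewrite /cofactor; congr (_ * \det _); apply/matrixP => a b.
  by rewrite !mxE eq_rows // eq_sym neq_lift.
have -> : \det (row' ord_max (col' ord_max A)) = cofactor B ord_max ord_max.
  by rewrite -cof /cofactor exprD -expr2 sqrr_sign mul1r.
rewrite !(expand_det_row _ ord_max) (bigD1 ord_max) //= [in RHS](bigD1 ord_max) //=.
rewrite cof (eq_bigr (fun j => B ord_max j * cofactor B ord_max j)) => [|j /eq_last->].
  by ring.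
by rewrite cof.
Qed.

Section Ties.
Variables (R : realType) (H S : nat) (x : 'I_S -> R).
Implicit Types (M : 'M[R]_(H, S)) (t : 'I_H).

Lemma loc_lipschitz_agg_cost t : loc_lipschitz (fun M => agg_cost x M t).
Proof.
apply: loc_lipschitz_sum => s.
by apply: loc_lipschitzM; [exact: loc_lipschitz_cst | exact: loc_lipschitz_coord].
Qed.

Lemma agg_cost_set_other t t' s0 v M : t' != t ->
  agg_cost x (mx_set (t, s0) v M) t' = agg_cost x M t'.
Proof.
by move=> /negbTE tt'; apply: eq_bigr => s _; rewrite mx_setE xpair_eqE tt'.
Qed.

Lemma agg_cost_set t s0 M :
  agg_cost x M t = x s0 * M t s0 + agg_cost x (mx_set (t, s0) 0 M) t.
Proof.
rewrite /agg_cost (bigD1 s0) //= [in RHS](bigD1 s0) //= mx_setE eqxx mulr0 add0r.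
by congr (_ + _); apply: eq_bigr => s /negbTE ss0; rewrite mx_setE xpair_eqE ss0 andbF.
Qed.

Lemma tie_neg (neg : set 'M[R]_(H, S) -> Prop) (s0 : 'I_S) t t' :
  null_ideal neg -> x s0 != 0 -> t != t' ->
  neg [set M | agg_cost x M t = agg_cost x M t'].
Proof.
move=> hneg xs0 tt'; pose f M := agg_cost x M t - agg_cost x M t'.
apply: (negS hneg (B := [set M | f M = 0])) => [M /= tie|]; first by rewrite /f tie subrr.
apply: (affine_zero_neg hneg (y := (t, s0)) (al := fun=> x s0)
  (be := fun M => f (mx_set (t, s0) 0 M))) => //.
- exact: loc_lipschitz_cst.
- apply/loc_lipschitz_mx_set/loc_lipschitzD; first exact: loc_lipschitz_agg_cost.
  exact/loc_lipschitzN/loc_lipschitz_agg_cost.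
- by move=> M v; rewrite mx_set_set.
- move=> M; rewrite /f /= (agg_cost_set_other (t' := t')) 1?eq_sym // {1}(agg_cost_set t s0 M).
  by rewrite addrA.
- by apply: (negS hneg _ (neg0 hneg)) => M /= /eqP; rewrite (negbTE xs0).
Qed.

End Ties.

Lemma BmatE (R : realType) (H S : nat) (M : 'M[R]_(H, S)) t i s :
  Bmat M t i s = M t s - M i s.
Proof. by rewrite /Bmat mulmxBl mul1mx -mulmxA -rowE !mxE big_ord1 !mxE mul1r. Qed.

Section LeadingMinors.
Variables (R : realType) (H' S' : nat) (t : 'I_H'.+1).
Implicit Types (M : 'M[R]_(H'.+1, S'.+1)).

Definition other_row (l : nat) : 'I_H'.+1 := inord (bump t l).

Lemma other_row_val l : (l < H')%N -> val (other_row l) = bump t l.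
Proof.
by move=> lH; apply: inordK; rewrite ltnS /bump; case: (t <= l)%N; [exact: lH | exact: ltnW].
Qed.

Lemma other_row_neq l : (l < H')%N -> other_row l != t.
Proof. by move=> lH; rewrite -val_eqE other_row_val // eq_sym neq_bump. Qed.

Lemma other_row_neq_lt l k : (l < k)%N -> (k < H')%N -> other_row l != other_row k.
Proof.
move=> lk kH; rewrite -val_eqE !other_row_val ?(ltn_trans lk) //.
by rewrite (inj_eq (can_inj (bumpK t))) ltn_eqF.
Qed.

(* Row [0] is the all-ones row of [C_k]; row [a > 0] is row [other_row a.-1]
   of [B_k], both restricted to the first [k + 1] columns. *)
Definition lead_mx (k : nat) M : 'M[R]_k.+1 := \matrix_(a, b)
  if a == 0 :> nat then 1 else M t (inord b) - M (other_row a.-1) (inord b).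

Definition lead_minor k M := \det (lead_mx k M).

Lemma lead_minor0 M : lead_minor 0 M = 1.
Proof. by rewrite /lead_minor det_mx11 mxE. Qed.

Lemma loc_lipschitz_lead_minor k : loc_lipschitz (lead_minor k).
Proof.
apply: loc_lipschitz_det => a b; under eq_fun do rewrite mxE.
case: eqP => _; first exact: loc_lipschitz_cst.
apply: loc_lipschitzD; first exact: loc_lipschitz_coord.
exact/loc_lipschitzN/loc_lipschitz_coord.
Qed.

Lemma lead_mx_set k r c v M (a b : 'I_k.+1) : r != t ->
  ((a : nat) != 0 -> (other_row a.-1, inord b) != (r, c)) ->
  lead_mx k (mx_set (r, c) v M) a b = lead_mx k M a b.
Proof.
move=> rt arow; rewrite !mxE; case: eqP => // /eqP /arow /negbTE a_rc.
by rewrite a_rc xpair_eqE eq_sym (negbTE rt).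
Qed.

Lemma lead_minor_set k c v M : (k < H')%N ->
  lead_minor k (mx_set (other_row k, c) v M) = lead_minor k M.
Proof.
move=> kH; congr (\det _); apply/matrixP => a b.
apply: lead_mx_set (other_row_neq kH) _ => a0.
rewrite xpair_eqE negb_and other_row_neq_lt //.
by case: a a0 => [[|a] ak].
Qed.

Lemma lead_minorS k M : (k < H')%N -> (k < S')%N ->
  lead_minor k.+1 M = - lead_minor k M * M (other_row k) (inord k.+1) +
                      lead_minor k.+1 (mx_set (other_row k, inord k.+1) 0 M).
Proof.
move=> kH kS; set y := (other_row k, inord k.+1).
rewrite /lead_minor (det_corner_update (B := lead_mx k.+1 (mx_set y 0 M))).
- have -> : row' ord_max (col' ord_max (lead_mx k.+1 M)) = lead_mx k M.
    by apply/matrixP => a b; rewrite !mxE !lift_max.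
  have /negbTE tr : t != other_row k by rewrite eq_sym other_row_neq.
  rewrite addrC !mxE /= /y !xpair_eqE !eqxx andbT tr /=.
  by congr (_ + _); ring.
- move=> a b a_max; rewrite lead_mx_set ?other_row_neq // => a0.
  rewrite xpair_eqE negb_and other_row_neq_lt //.
  move: a_max a0; case: a => [[|a] ak] //=; rewrite -val_eqE /= eqSS => ak' _.
  by rewrite ltn_neqAle ak'; exact: ak.
- move=> j j_max; rewrite lead_mx_set ?other_row_neq //= => _.
  rewrite xpair_eqE eqxx /=; apply: contra j_max => /eqP/(congr1 val) /=.
  rewrite !inordK ?ltnS // => [/eqP|]; first by rewrite -val_eqE.
  by rewrite -ltnS (leq_trans (ltn_ord j)).
Qed.

End LeadingMinors.

Lemma lead_minor_neg (R : realType) (H' S' : nat) (neg : set 'M[R]_(H'.+1, S'.+1) -> Prop)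
    (t : 'I_H'.+1) (k : nat) :
  null_ideal neg -> (S' <= H')%N -> (k <= S')%N -> neg [set M | lead_minor t k M = 0].
Proof.
move=> hneg SH; elim: k => [_|k IH kS].
  by apply: (negS hneg _ (neg0 hneg)) => M /=; rewrite lead_minor0 => /eqP; rewrite oner_eq0.
have kH : (k < H')%N := leq_trans kS SH.
apply: (affine_zero_neg hneg (y := (other_row t k, inord k.+1))
  (al := fun M => - lead_minor t k M)
  (be := fun M => lead_minor t k.+1 (mx_set (other_row t k, inord k.+1) 0 M))).
- exact/loc_lipschitzN/loc_lipschitz_lead_minor.
- exact/loc_lipschitz_mx_set/loc_lipschitz_lead_minor.
- by move=> M v; rewrite lead_minor_set.
- by move=> M v; rewrite mx_set_set.
- by move=> M; rewrite lead_minorS.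
- by apply: (negS hneg _ (IH (ltnW kS))) => M /= /eqP; rewrite oppr_eq0 => /eqP.
Qed.

Lemma rank_Cmat (R : realType) (H' S' : nat) (t : 'I_H'.+1) (M : 'M[R]_(H'.+1, S'.+1)) :
  lead_minor t S' M != 0 -> \rank (Cmat M t) = S'.+1.
Proof.
move=> minor_neq0.
pose f (a : 'I_S'.+1) : 'I_(H'.+1 + 1) :=
  if a == 0 :> nat then rshift _ (ord0 : 'I_1) else lshift 1 (other_row t a.-1).
have lead_rows : lead_mx t S' M = rowsub f (Cmat M t).
  apply/matrixP => a b; rewrite [LHS]mxE [RHS]mxE /Cmat /f.
  by case: eqP => _; [rewrite col_mxEd mxE | rewrite col_mxEu BmatE inord_val].
have lead_unit : lead_mx t S' M \in unitmx by rewrite unitmxE unitfE.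
apply/eqP; rewrite eqn_leq rank_leq_col -{1}(mxrank_unit lead_unit) lead_rows rowsubE.
exact: mxrankM_maxr.
Qed.

Lemma generic_unique_argmin_rank (R : realType) (H' S' : nat) (x : 'I_S'.+1 -> R)
    (M : 'M[R]_(H'.+1, S'.+1)) :
  (forall t t', t != t' -> agg_cost x M t != agg_cost x M t') ->
  (forall t, lead_minor t S' M != 0) ->
  exists t, unique_argmin x M t /\ \rank (Cmat M t) = S'.+1.
Proof.
move=> no_tie minor_neq0.
have [t _ t_min] := arg_minP (fun t => agg_cost x M t) (isT : xpredT ord0).
exists t; split; last exact: rank_Cmat.
by move=> t' t't; rewrite lt_neqAle t_min // andbT no_tie // eq_sym.
Qed.

Lemma nongeneric_neg (R : realType) (H' S' : nat) (neg : set 'M[R]_(H'.+1, S'.+1) -> Prop)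
    (x : 'I_S'.+1 -> R) :
  null_ideal neg -> (S' <= H')%N -> (forall s, 0 < x s) ->
  neg [set M | ~ exists t, unique_argmin x M t /\ \rank (Cmat M t) = S'.+1].
Proof.
move=> hneg SH x_gt0.
apply: (negS hneg (B := \bigcup_(p : 'I_H'.+1 * 'I_H'.+1)
    [set M | p.1 != p.2 /\ agg_cost x M p.1 = agg_cost x M p.2] `|`
  \bigcup_t [set M | lead_minor t S' M = 0])).
  move=> M /= M_bad; apply: contrapT => /not_orP[no_tie no_zero]; apply: M_bad.
  apply: generic_unique_argmin_rank => [t t' tt'|t]; apply/eqP => eq0.
    by apply: no_tie; exists (t, t').
  by apply: no_zero; exists t.
apply: (negU hneg); apply: (neg_bigcup_finite hneg).
  case=> t t' /=; have [<-|tt'] := eqVneq t t'.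
    by apply: (negS hneg _ (neg0 hneg)) => M [/eqP].
  by apply: (negS hneg _ (tie_neg hneg (lt0r_neq0 (x_gt0 ord0)) tt')) => M [].
by move=> t; apply: lead_minor_neg hneg SH (leqnn _).
Qed.

Theorem theorem3 (R : realType) (d : measure_display) (Omega : measurableType d)
  (P : probability Omega R) (H S : nat) (D : Omega -> 'M[R]_(H, S))
  (x : 'I_S -> R) :
  (1 <= S)%N -> (S <= H)%N ->
  (forall i j, measurable_fun setT (fun w => D w i j)) ->
  {ae P, forall w, forall i j, 0 <= D w i j} ->
  (forall A : set 'M[R]_(H, S), lebesgue_null A -> P.-negligible (D @^-1` A)) ->
  (forall s, 0 < x s) -> \sum_(s < S) x s = 1 ->
  {ae P, forall w, exists t : 'I_H,
      unique_argmin x (D w) t /\ \rank (Cmat (D w) t) = S}.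
Proof.
move=> S_gt0 SH _ _ D_null x_gt0 _.
case: S S_gt0 SH x D D_null x_gt0 => [//|S'] _.
case: H => [//|H'] SH x D D_null x_gt0.
have hneg : null_ideal (fun A => P.-negligible (D @^-1` A)).
  split => [A B AB|||//].
  - by apply: negligibleS => w /AB.
  - by rewrite preimage_set0; exact: negligible_set0.
  - by move=> F nF; rewrite preimage_bigcup; exact: negligible_bigcup.
by apply: negligibleS (nongeneric_neg hneg SH x_gt0) => w /= w_bad; apply: w_bad.
Qed.
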